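(* Let $G$ be a group generated by a set $X=\{x_1,\dots,x_n\}$ of cardinality $n$ with non-trivial center $Z=Z(G)$. Let $\bar G=G/Z$ with generating set $\bar X$ the image of $X$. Suppose the commutator width $\mathrm{cw}(G)=l$ and $\mathrm{pw}(\bar G,\bar X)=k$ (both finite). Then $$\mathrm{pw}(G,X)\le n+l(2k+\varepsilon),$$ where $\varepsilon=0$ if $k$ is even and $\varepsilon=1$ if $k$ is odd.
   Context: A palindrome in a group generated by a set $X$ is an element represented by a reduced word in $X^{\pm1}$ reading the same forwards and backwards; $l_{\mathcal P}(g)$ is the minimal number of palindromes whose product is $g$; $\mathrm{pw}(G,X)=\sup_{g\in G}l_{\mathcal P}(g)$. The commutator is $[g,h]=g^{-1}h^{-1}gh$; the commutator length of $g\in G'=[G,G]$ is the minimal number of commutators whose product is $g$, and $\mathrm{cw}(G)$ is the supremum of commutator lengths over $G'$. *)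

From mathcomp Require Import all_boot.
Set Implicit Arguments.
Unset Strict Implicit.
Unset Printing Implicit Defensive.

Record group := Group {
  gcar :> Type;
  gmul : gcar -> gcar -> gcar;
  ginv : gcar -> gcar;
  gone : gcar;
  gmulA : forall a b c, gmul a (gmul b c) = gmul (gmul a b) c;
  gmul1 : forall a, gmul gone a = a;
  gmulV : forall a, gmul (ginv a) a = gone
}.

Section Defs.
Variable G : group.

Definition gprod (s : seq G) : G := foldr (@gmul G) (gone G) s.

Definition is_hom (H : group) (f : G -> H) : Prop :=
  forall a b, f (gmul a b) = gmul (f a) (f b).

Definition central (z : G) : Prop := forall g, gmul z g = gmul g z.

(* Words over the alphabet X^{+-1}, where X = {x_0,...,x_{n-1}} is indexed by 'I_n;
   the letter (i, false) stands for x_i and (i, true) for x_i^{-1}. *)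
Variable n : nat.
Variable x : 'I_n -> G.

Definition eval_letter (a : 'I_n * bool) : G :=
  if a.2 then ginv (x a.1) else x a.1.

Definition word_eval (w : seq ('I_n * bool)) : G :=
  gprod (map eval_letter w).

Fixpoint reduced (w : seq ('I_n * bool)) : bool :=
  match w with
  | a :: ((b :: _) as w') => ~~ ((a.1 == b.1) && (a.2 != b.2)) && reduced w'
  | _ => true
  end.

Definition generates : Prop := forall g : G, exists w, word_eval w = g.

Definition palindrome (g : G) : Prop :=
  exists w, [&& reduced w & rev w == w] /\ word_eval w = g.

Definition pw_le (m : nat) : Prop :=
  forall g : G, exists ps : seq G,
    size ps <= m /\ (forall i, i < size ps -> palindrome (nth (gone G) ps i))
    /\ gprod ps = g.

Definition pw_eq (k : nat) : Prop := pw_le k /\ forall m, pw_le m -> k <= m.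

End Defs.

Section Comm.
Variable G : group.

Definition comm (g h : G) : G := gmul (ginv g) (gmul (ginv h) (gmul g h)).

Definition comm_prod (s : seq (G * G)) : G := gprod (map (fun p => comm p.1 p.2) s).

Definition in_derived (g : G) : Prop := exists s, comm_prod s = g.

Definition cw_le (m : nat) : Prop :=
  forall g, in_derived g -> exists s, size s <= m /\ comm_prod s = g.

Definition cw_eq (l : nat) : Prop := cw_le l /\ forall m, cw_le m -> l <= m.

End Comm.

From mathcomp Require Import all_boot.
Set Implicit Arguments.
Unset Strict Implicit.
Unset Printing Implicit Defensive.

(* Write g as a word w in X. Modulo [G, G], w equals the product over i of the
   letters of w with index i; each such factor is a power of x_i, hence a
   palindrome, and the quotient lies in [G, G], so it is a product of at most l
   commutators [u, v]. Since Z = ker pi, u can be replaced by a product u' of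
   m <= k palindromes lifting a palindromic decomposition of its image, and
   [u', v] = u'^-1 (v^-1 u' v). Reversing and inverting the factors writes u'^-1
   as m palindromes, and conjugating a product of m palindromic words by a word a
   gives m + (m mod 2) palindromic words, alternately of the form a w rev(a) and
   rev(a)^-1 w a^-1. So each commutator costs at most 2k + epsilon palindromes. *)

Section GroupFacts.
Variable G : group.
Implicit Types a b : G.

Lemma mulgV a : gmul a (ginv a) = gone G.
Proof.
transitivity (gmul (gmul (ginv (ginv a)) (ginv a)) (gmul a (ginv a))).
  by rewrite gmulV gmul1.
by rewrite -gmulA (gmulA (ginv a)) gmulV gmul1 gmulV.
Qed.

Lemma mulg1 a : gmul a (gone G) = a.
Proof. by rewrite -(gmulV a) gmulA mulgV gmul1. Qed.

Lemma mulKg a b : gmul (ginv a) (gmul a b) = b.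
Proof. by rewrite gmulA gmulV gmul1. Qed.

Lemma mulKVg a b : gmul a (gmul (ginv a) b) = b.
Proof. by rewrite gmulA mulgV gmul1. Qed.

Lemma invg_unique a b : gmul a b = gone G -> ginv a = b.
Proof. by move=> ab1; rewrite -(mulKg a b) ab1 mulg1. Qed.

Lemma invgK a : ginv (ginv a) = a.
Proof. by apply: invg_unique; rewrite gmulV. Qed.

Lemma invMg a b : ginv (gmul a b) = gmul (ginv b) (ginv a).
Proof. by apply: invg_unique; rewrite -gmulA mulKVg mulgV. Qed.

Lemma invg1 : ginv (gone G) = gone G.
Proof. by apply: invg_unique; rewrite gmul1. Qed.

Lemma gprod_cat (s t : seq G) : gprod (s ++ t) = gmul (gprod s) (gprod t).
Proof. by elim: s => [|a s IHs] /=; rewrite ?gmul1 // IHs gmulA. Qed.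

Lemma invg_gprod (s : seq G) : ginv (gprod s) = gprod (map (@ginv G) (rev s)).
Proof.
elim: s => [|a s IHs] /=; first by rewrite invg1.
by rewrite invMg IHs rev_cons map_rcons -cats1 gprod_cat /= mulg1.
Qed.

End GroupFacts.

Ltac gsimpl :=
  rewrite ?invMg ?invgK -?gmulA ?(mulKg, mulKVg, gmulV, mulgV, gmul1, mulg1).

Section Homomorphisms.
Variables (G H : group) (pi : G -> H).
Hypothesis pi_hom : is_hom pi.

Lemma hom1 : pi (gone G) = gone H.
Proof.
have pi1_idem : gmul (pi (gone G)) (pi (gone G)) = pi (gone G) by rewrite -pi_hom gmul1.
by rewrite -(mulKg (pi (gone G)) (pi (gone G))) pi1_idem gmulV.
Qed.

Lemma homV a : pi (ginv a) = ginv (pi a).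
Proof. by symmetry; apply: invg_unique; rewrite -pi_hom mulgV hom1. Qed.

Lemma hom_gprod s : pi (gprod s) = gprod (map pi s).
Proof. by elim: s => [|a s IHs] /=; [exact: hom1 | rewrite pi_hom IHs]. Qed.

Lemma hom_word_eval n (x : 'I_n -> G) w :
  pi (word_eval x w) = word_eval (fun i => pi (x i)) w.
Proof.
rewrite /word_eval hom_gprod -map_comp; congr gprod; apply: eq_map => -[i []] //=.
exact: homV.
Qed.

End Homomorphisms.

Section Words.
Variable n : nat.
Local Notation letter := ('I_n * bool)%type.
Local Notation word := (seq letter).

Definition inv_letter (c : letter) : letter := (c.1, ~~ c.2).

Definition inv_word (w : word) : word := map inv_letter (rev w).

Definition palindromic {T : eqType} (s : seq T) := rev s == s.

Lemma inv_letterK : involutive inv_letter.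
Proof. by case=> i b; rewrite /inv_letter negbK. Qed.

Lemma inv_letter_neq c : inv_letter c != c.
Proof. by case: c => i b; rewrite /inv_letter xpair_eqE eqxx /=; case: b. Qed.

Lemma eq_inv_letterC c d : (d == inv_letter c) = (c == inv_letter d).
Proof. by rewrite -(inj_eq (inv_inj inv_letterK)) inv_letterK eq_sym. Qed.

Lemma palindromic_inv_word w : palindromic w -> palindromic (inv_word w).
Proof. by move/eqP=> w_pal; rewrite /palindromic /inv_word w_pal -map_rev w_pal. Qed.

Lemma palindromic_conj (T : eqType) (a s : seq T) :
  palindromic s -> palindromic (a ++ s ++ rev a).
Proof. by rewrite /palindromic !rev_cat revK catA => /eqP->. Qed.

Lemma rev_inv_word_rev (a : word) : rev (inv_word (rev a)) = inv_word a.
Proof. by rewrite /inv_word revK map_rev. Qed.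

Lemma reducedE w : reduced w = sorted (fun c d => d != inv_letter c) w.
Proof.
elim: w => [|c [|d w] IHw] //; move: IHw => /= ->; congr andb.
by case: c d => i u [j v]; rewrite /inv_letter xpair_eqE eq_sym; case: u v => [] [].
Qed.

Lemma palindromic_cases (w : word) : palindromic w ->
  size w <= 1 \/ exists c m, palindromic m /\ w = c :: rcons m c.
Proof.
case: w => [|c t]; first by left.
case/lastP: t => [|m e]; first by left.
rewrite /palindromic rev_cons rev_rcons => /eqP[-> /rcons_inj[/eqP m_pal]].
by right; exists c, m.
Qed.

End Words.

Arguments inv_word {n} w.

Section Evaluation.
Variables (G : group) (n : nat) (x : 'I_n -> G).
Local Notation eval := (word_eval x).

Lemma eval_cat u w : eval (u ++ w) = gmul (eval u) (eval w).
Proof. by rewrite /word_eval map_cat gprod_cat. Qed.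

Lemma eval_cons c w : eval (c :: w) = gmul (eval_letter x c) (eval w).
Proof. by []. Qed.

Lemma eval_rcons w c : eval (rcons w c) = gmul (eval w) (eval_letter x c).
Proof. by rewrite -cats1 eval_cat /word_eval /= mulg1. Qed.

Lemma eval_inv_letter c : eval_letter x (inv_letter c) = ginv (eval_letter x c).
Proof. by case: c => i [] /=; rewrite ?invgK. Qed.

Lemma eval_inv_word w : eval (inv_word w) = ginv (eval w).
Proof.
rewrite /word_eval invg_gprod /inv_word !map_rev -!map_comp.
by congr (gprod (rev _)); apply: eq_map => c /=; rewrite eval_inv_letter.
Qed.

Lemma eval_cancel_head c w : eval (c :: inv_letter c :: w) = eval w.
Proof. by rewrite /word_eval /= eval_inv_letter mulKVg. Qed.

Lemma eval_cancel_last w c : eval (rcons (rcons w (inv_letter c)) c) = eval w.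
Proof. by rewrite !eval_rcons eval_inv_letter -gmulA gmulV mulg1. Qed.

Lemma palindrome_wrap c v : reduced v -> palindromic v ->
  palindrome x (eval (c :: rcons v c)).
Proof.
rewrite reducedE => v_red v_pal.
have [|[d [m [m_pal def_v]]]] := palindromic_cases v_pal.
  case: v {v_red v_pal} => [|d [|//]] _.
    exists [:: c; c]; rewrite reducedE /= eq_sym inv_letter_neq.
    by rewrite /palindromic /= eqxx.
  have [->|d_c] := eqVneq d (inv_letter c).
    by exists [:: c]; rewrite /= /palindromic /= eqxx eval_cancel_head.
  exists [:: c; d; c]; rewrite reducedE /= d_c -eq_inv_letterC d_c.
  by rewrite /palindromic /= eqxx.
have [d_c|d_c] := eqVneq d (inv_letter c).
  exists m; rewrite (eqP m_pal) eqxx def_v d_c eval_cancel_head eval_cancel_last.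
  rewrite andbT reducedE; split=> //.
  by move: v_red; rewrite def_v /= rcons_path => /andP[/path_sorted].
exists (c :: rcons v c); split=> //.
rewrite reducedE /palindromic rev_cons rev_rcons (eqP v_pal) eqxx andbT /=.
move: v_red; rewrite def_v /= !rcons_path /= => ->.
by rewrite last_rcons d_c -eq_inv_letterC d_c.
Qed.

Lemma palindromic_palindrome w : palindromic w -> palindrome x (eval w).
Proof.
have [b] := ubnP (size w); elim: b w => // b IHb w w_size w_pal.
have [w_small | [c [m [m_pal def_w]]]] := palindromic_cases w_pal.
  exists w; rewrite (eqP w_pal) eqxx andbT.
  by split=> //; case: w w_small {w_size w_pal} => [|? []].
have m_size : size m < b by move: w_size; rewrite def_w /= size_rcons ltnS => /ltnW.
have [v [/andP[v_red v_pal] v_m]] := IHb m m_size m_pal.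
by rewrite def_w eval_cons eval_rcons -v_m -eval_rcons -eval_cons; apply: palindrome_wrap.
Qed.

Lemma eval_single_generator i u : all (fun c : 'I_n * bool => c.1 == i) u ->
  exists m b, eval u = eval (nseq m (i, b)).
Proof.
elim: u => [|[j b] u IHu] /=; first by exists 0, true.
case/andP=> /eqP-> /IHu[[|m] [b' u_eq]]; rewrite eval_cons u_eq; first by exists 1, b.
have [<-|b'b] := eqVneq b' b; first by exists m.+2, b'.
exists m, b'; rewrite [nseq _ _]/= (_ : (i, b) = inv_letter (i, b')).
  by rewrite eval_inv_letter eval_cons mulKg.
by rewrite /inv_letter; case: b b'b {u_eq}; case: b'.
Qed.

Lemma palindrome_single_generator i u : all (fun c : 'I_n * bool => c.1 == i) u ->
  palindrome x (eval u).
Proof.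
case/eval_single_generator=> m [b ->].
by apply: palindromic_palindrome; rewrite /palindromic rev_nseq.
Qed.

Lemma gprod_inv_words (ws : seq (seq ('I_n * bool))) :
  gprod (map eval (map inv_word (rev ws))) = ginv (gprod (map eval ws)).
Proof.
rewrite invg_gprod -map_comp -!map_rev -map_comp; congr gprod.
by apply: eq_map => w /=; rewrite eval_inv_word.
Qed.

Lemma palindrome_words (ps : seq G) :
  (forall i, i < size ps -> palindrome x (nth (gone G) ps i)) ->
  exists ws, all palindromic ws /\ map eval ws = ps.
Proof.
elim: ps => [|p ps IHps] ps_pal; first by exists [::].
have [ws [ws_pal <-]] := IHps (fun i => ps_pal i.+1).
have [w [/andP[_ w_pal] /= <-]] := ps_pal 0 isT.
by exists (w :: ws); rewrite /= ws_pal andbT.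
Qed.

Lemma pw_le_palindromic_words m :
  (forall g, exists ws, [/\ all palindromic ws, size ws <= m & gprod (map eval ws) = g]) ->
  pw_le x m.
Proof.
move=> ws_of g; have [ws [ws_pal ws_size <-]] := ws_of g.
exists (map eval ws); rewrite size_map; split=> //; split=> // i i_lt.
rewrite (nth_map [::]) //; apply: palindromic_palindrome.
exact: (allP ws_pal _ (mem_nth _ i_lt)).
Qed.

End Evaluation.

Section DerivedSubgroup.
Variable G : group.
Implicit Types a b : G.

Lemma in_derived1 : in_derived (gone G).
Proof. by exists [::]. Qed.

Lemma in_derivedM a b : in_derived a -> in_derived b -> in_derived (gmul a b).
Proof.
by move=> [s <-] [t <-]; exists (s ++ t); rewrite /comm_prod map_cat gprod_cat.
Qed.

Lemma in_derived_comm a b : in_derived (comm a b).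
Proof. by exists [:: (a, b)]; rewrite /comm_prod /= mulg1. Qed.

Lemma comm_mull_central a z b : central z -> comm (gmul a z) b = comm a b.
Proof.
move=> z_central; rewrite {1}/comm invMg -!gmulA (z_central b).
rewrite [gmul (ginv a) _](_ : _ = gmul (comm a b) z); last by rewrite /comm -!gmulA.
by rewrite -z_central mulKg.
Qed.

End DerivedSubgroup.

Section Abelianization.
Variables (G : group) (n : nat) (x : 'I_n -> G).
Local Notation letter := ('I_n * bool)%type.
Local Notation eval := (word_eval x).

Definition generator_block (i : 'I_n) (w : seq letter) := [seq c <- w | c.1 == i].

Lemma in_derived_split_filter (p : pred letter) w :
  in_derived (gmul (ginv (gmul (eval (filter p w)) (eval (filter (predC p) w)))) (eval w)).
Proof.
elim: w => [|c w IHw] /=; first by rewrite /word_eval /= gmul1 invg1 gmul1; apply: in_derived1.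
case: (p c) => /=; rewrite !eval_cons; first by move: IHw; gsimpl.
set F := eval (filter p w); set R := eval (filter (predC p) w); set C := eval_letter x c.
(* the letter c is moved past F at the cost of one commutator *)
have -> : gmul (ginv (gmul F (gmul C R))) (gmul C (eval w)) =
    gmul (comm (gmul (ginv R) (gmul C R)) (gmul (ginv R) (gmul F R)))
         (gmul (ginv (gmul F R)) (eval w)) by rewrite /comm; gsimpl.
exact: in_derivedM (in_derived_comm _ _) IHw.
Qed.

Lemma in_derived_blocks (s : seq 'I_n) w : uniq s -> all (fun c : letter => c.1 \in s) w ->
  in_derived (gmul (ginv (gprod [seq eval (generator_block i w) | i <- s])) (eval w)).
Proof.
elim: s w => [|i s IHs] w /=.
  by case: w => // _ _; rewrite invg1 gmul1; apply: in_derived1.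
case/andP=> i_notin_s s_uniq w_s.
set p := fun c : letter => c.1 == i.
have rest_s : all (fun c : letter => c.1 \in s) (filter (predC p) w).
  rewrite all_filter; apply/allP=> c c_w; apply/implyP=> c_not_i.
  by move/allP: w_s => /(_ c c_w); rewrite inE -/(p c) (negbTE c_not_i).
have blocks_rest : [seq eval (generator_block j (filter (predC p) w)) | j <- s] =
                   [seq eval (generator_block j w) | j <- s].
  apply/eq_in_map=> j j_s; congr eval; rewrite /generator_block -filter_predI.
  apply: eq_filter => c /=; rewrite /p; case: eqP => //= ->.
  by apply/negP=> /eqP j_i; move: i_notin_s; rewrite -j_i j_s.
have := IHs _ s_uniq rest_s; rewrite blocks_rest.
set Q := gprod _; set R := eval (filter (predC p) w) => Q_R.
rewrite (_ : gmul _ (eval w) = gmul (gmul (ginv Q) R)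
    (gmul (ginv (gmul (eval (filter p w)) R)) (eval w))); last by gsimpl.
exact: in_derivedM Q_R (in_derived_split_filter p w).
Qed.

Lemma generator_blocks_palindromic w : exists ws, [/\ all palindromic ws, size ws = n &
  in_derived (gmul (ginv (gprod (map eval ws))) (eval w))].
Proof.
set bs := [seq eval (generator_block i w) | i <- enum 'I_n].
have [|ws [ws_pal ws_bs]] := @palindrome_words G n x bs.
  move=> i; rewrite size_map => i_lt; have i_n : i < n by rewrite size_enum_ord in i_lt.
  rewrite /bs (nth_map (Ordinal i_n)) //.
  exact/palindrome_single_generator/filter_all.
exists ws; rewrite -(size_map eval) ws_bs size_map size_enum_ord; split=> //.
by apply: in_derived_blocks; [apply: enum_uniq | apply/allP=> c _; rewrite mem_enum].
Qed.

End Abelianization.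

Section PalindromicConjugates.
Variables (G : group) (n : nat) (x : 'I_n -> G).
Local Notation word := (seq ('I_n * bool)).
Local Notation eval := (word_eval x).

(* The conjugates of w by a and by inv_word (rev a) are palindromic words, and
   alternating between them telescopes the conjugators. *)
Lemma conj_palindromic_words_alt (ws : seq word) (a : word) : all palindromic ws ->
  exists ts : seq word, [/\ all palindromic ts, size ts = size ws &
    gprod (map eval ts) = gmul (eval a) (gmul (gprod (map eval ws))
      (if odd (size ws) then eval (rev a) else ginv (eval a)))].
Proof.
elim: ws a => [|w ws IHws] a /=; first by exists [::]; rewrite gmul1 mulgV.
case/andP=> w_pal /(IHws (inv_word (rev a)))[ts [ts_pal ts_size ts_eval]].
exists ((a ++ w ++ rev a) :: ts); split; first by rewrite /= palindromic_conj.
  by rewrite /= ts_size.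
rewrite /= ts_eval rev_inv_word_rev !eval_inv_word !eval_cat.
by case: (odd (size ws)); gsimpl.
Qed.

Lemma conj_palindromic_words (ws : seq word) (a : word) : all palindromic ws ->
  exists ts : seq word, [/\ all palindromic ts, size ts = size ws + odd (size ws) &
    gprod (map eval ts) = gmul (eval a) (gmul (gprod (map eval ws)) (ginv (eval a)))].
Proof.
case/(conj_palindromic_words_alt a)=> ts [ts_pal ts_size ts_eval].
case ws_odd: (odd (size ws)) ts_eval => ts_eval; last by exists ts; rewrite addn0.
exists (rcons ts (inv_word (rev a) ++ inv_word a)); split.
- rewrite -cats1 all_cat ts_pal /= andbT.
  by have := @palindromic_conj _ (inv_word (rev a)) [::] isT; rewrite rev_inv_word_rev.
- by rewrite size_rcons ts_size addn1.
- rewrite -cats1 map_cat gprod_cat ts_eval /= mulg1 eval_cat !eval_inv_word.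
  by gsimpl.
Qed.

End PalindromicConjugates.

Lemma leq_add_odd m k : m <= k -> m + odd m <= k + odd k.
Proof.
rewrite leq_eqVlt => /orP[/eqP-> // | m_lt_k].
apply: leq_trans (leq_addr _ _); apply: leq_trans m_lt_k.
by rewrite -addn1 leq_add2l leq_b1.
Qed.

Section Commutators.
Variables (G Gb : group) (n : nat) (x : 'I_n -> G) (pi : G -> Gb) (k : nat).
Hypothesis x_generates : generates x.
Hypothesis pi_hom : is_hom pi.
Hypothesis ker_pi_central : forall g, pi g = gone Gb -> central g.
Hypothesis pw_quotient : pw_le (fun i => pi (x i)) k.
Local Notation eval := (word_eval x).

Lemma lift_palindromic_words u : exists ws, [/\ all palindromic ws, size ws <= k &
  pi (gprod (map eval ws)) = pi u].
Proof.
have [qs [qs_size [qs_pal qs_u]]] := pw_quotient (pi u).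
have [ws [ws_pal ws_qs]] := palindrome_words qs_pal.
exists ws; split=> //; first by rewrite -(size_map (word_eval (fun i => pi (x i)))) ws_qs.
rewrite -qs_u -ws_qs (hom_gprod pi_hom) -map_comp.
by congr gprod; apply: eq_map => w /=; apply: hom_word_eval.
Qed.

(* As ker pi is central, [u, v] = [u', v] for any lift u' of a palindromic decomposition
   of pi u, and [u', v] = u'^-1 * (v^-1 u' v). *)
Lemma commutator_palindromic_words u v : exists ws, [/\ all palindromic ws,
  size ws <= 2 * k + odd k & gprod (map eval ws) = comm u v].
Proof.
have [ws [ws_pal ws_size pi_ws]] := lift_palindromic_words u.
set u' := gprod (map eval ws) in pi_ws.
have z_central : central (gmul (ginv u') u).
  by apply: ker_pi_central; rewrite pi_hom (homV pi_hom) pi_ws gmulV.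
have [a a_v] := x_generates (ginv v).
have [ts [ts_pal ts_size ts_eval]] := conj_palindromic_words x a ws_pal.
exists (map inv_word (rev ws) ++ ts); split.
- rewrite all_cat ts_pal andbT all_map all_rev.
  by apply/allP=> w w_ws; apply/palindromic_inv_word/(allP ws_pal).
- rewrite size_cat size_map size_rev ts_size mul2n -addnn -addnA.
  exact: leq_add ws_size (leq_add_odd ws_size).
- rewrite map_cat gprod_cat gprod_inv_words ts_eval a_v invgK -(mulKVg u' u).
  by rewrite comm_mull_central.
Qed.

Lemma comm_prod_palindromic_words (s : seq (G * G)) : exists ws, [/\ all palindromic ws,
  size ws <= size s * (2 * k + odd k) & gprod (map eval ws) = comm_prod s].
Proof.
elim: s => [|[u v] s [ws [ws_pal ws_size ws_s]]]; first by exists [::].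
have [cs [cs_pal cs_size cs_uv]] := commutator_palindromic_words u v.
exists (cs ++ ws); rewrite all_cat cs_pal size_cat mulSn leq_add //.
by rewrite map_cat gprod_cat cs_uv ws_s.
Qed.

End Commutators.

Theorem proposition2p8 (G Gb : group) (n : nat) (x : 'I_n -> G)
  (pi : G -> Gb) (l k : nat) :
  injective x ->
  generates x ->
  (exists z : G, central z /\ z <> gone G) ->
  is_hom pi ->
  (forall y : Gb, exists g : G, pi g = y) ->
  (forall g : G, pi g = gone Gb <-> central g) ->
  cw_eq G l ->
  pw_eq (fun i => pi (x i)) k ->
  pw_le x (n + l * (2 * k + odd k)).
Proof.
move=> _ x_gen _ pi_hom _ ker_pi [cw_l _] [pw_k _].
have ker_pi_central g : pi g = gone Gb -> central g by case: (ker_pi g).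
apply: pw_le_palindromic_words => g; have [w <-] := x_gen g.
have [bs [bs_pal bs_size /cw_l[s [s_size s_eval]]]] := generator_blocks_palindromic x w.
have [cs [cs_pal cs_size cs_eval]] :=
  comm_prod_palindromic_words x_gen pi_hom ker_pi_central pw_k s.
exists (bs ++ cs); split; first by rewrite all_cat bs_pal.
  by rewrite size_cat bs_size leq_add2l (leq_trans cs_size) // leq_mul2r s_size orbT.
by rewrite map_cat gprod_cat cs_eval s_eval mulKVg.
Qed.
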